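(* Consider a downlink system with $K$ users, $M$ transmit antennas, $N$ receive antennas per user and $d$ data streams per user. Let $\mathbf{H}_k\in\mathbb{C}^{N\times M}$ be channel matrices, $\sigma_k^2>0$ noise powers and $P_{\max}>0$, and let $\kappa \triangleq \max_k \sigma_{\max}(\mathbf{H}_k^H\mathbf{H}_k)>0$. For any receive matrices $\mathbf{U}=\{\mathbf{U}_k\}_{k=1}^K$, $\mathbf{U}_k\in\mathbb{C}^{N\times d}$, and any precoders $\mathbf{V}=\{\mathbf{V}_k\}_{k=1}^K$, $\mathbf{V}_k\in\mathbb{C}^{M\times d}$, satisfying $\sum_{k=1}^K\operatorname{Tr}(\mathbf{V}_k\mathbf{V}_k^H)\le P_{\max}$, the matrix $$\mathbf{E}_k=(\mathbf{I}-\mathbf{U}_k^H\mathbf{H}_k\mathbf{V}_k)(\mathbf{I}-\mathbf{U}_k^H\mathbf{H}_k\mathbf{V}_k)^H+\mathbf{U}_k^H\Big(\sum_{j\neq k}\mathbf{H}_k\mathbf{V}_j\mathbf{V}_j^H\mathbf{H}_k^H+\sigma_k^2\mathbf{I}\Big)\mathbf{U}_k$$ satisfies $$\lambda_{\min}(\mathbf{E}_k)\ge \frac{\sigma_k^2}{P_{\max}\kappa+\sigma_k^2}\quad\text{for all } k.$$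
   Context: $\sigma_{\max}(\cdot)$ denotes the largest singular value and $\lambda_{\min}(\cdot)$ the smallest eigenvalue of a Hermitian matrix; $\mathbf{I}$ is the $d\times d$ identity (or $N\times N$ identity inside the bracket). *)

From mathcomp Require Import all_boot all_order all_algebra.
From mathcomp Require Import classical_sets reals complex.
Set Implicit Arguments. Unset Strict Implicit. Unset Printing Implicit Defensive.
Import Order.TTheory GRing.Theory Num.Theory.
Local Open Scope ring_scope.
Local Open Scope complex_scope.
Local Open Scope classical_set_scope.

Definition ctrmx (R : realType) (m n : nat) (A : 'M[R[i]]_(m, n)) : 'M[R[i]]_(n, m) :=
  (map_mx Num.conj A)^T.

(* Real eigenvalues of a square complex matrix.  For a Hermitian matrix these are
   all of its eigenvalues. *)
Definition real_eigs (R : realType) (n : nat) (A : 'M[R[i]]_n) : set R :=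
  [set x : R | eigenvalue A x%:C].

Definition lambda_min (R : realType) (n : nat) (A : 'M[R[i]]_n) : R :=
  inf (real_eigs A).
Definition lambda_max (R : realType) (n : nat) (A : 'M[R[i]]_n) : R :=
  sup (real_eigs A).

Definition sigma_max (R : realType) (m n : nat) (A : 'M[R[i]]_(m, n)) : R :=
  Num.sqrt (lambda_max (ctrmx A *m A)).

Definition kappa (R : realType) (K N M : nat) (H : 'I_K -> 'M[R[i]]_(N, M)) : R :=
  \big[Num.max/0]_(k < K) sigma_max (ctrmx (H k) *m H k).

Definition Emat (R : realType) (K M N d : nat) (H : 'I_K -> 'M[R[i]]_(N, M))
  (sigma2 : 'I_K -> R) (U : 'I_K -> 'M[R[i]]_(N, d)) (V : 'I_K -> 'M[R[i]]_(M, d))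
  (k : 'I_K) : 'M[R[i]]_d :=
  let T := 1%:M - ctrmx (U k) *m H k *m V k in
  T *m ctrmx T
  + ctrmx (U k) *m
      (\sum_(j < K | j != k) H k *m V j *m ctrmx (V j) *m ctrmx (H k)
       + (sigma2 k)%:C%:M) *m U k.

From mathcomp Require Import all_boot all_order all_algebra.
From mathcomp Require Import classical_sets reals complex.
From mathcomp Require Import sesquilinear spectral ring.
Import Order.TTheory GRing.Theory Num.Theory.
Local Open Scope ring_scope.
Local Open Scope complex_scope.
Local Open Scope sesquilinear_scope.
Set Implicit Arguments. Unset Strict Implicit. Unset Printing Implicit Defensive.

(* Let v be an eigenvector of E_k for the eigenvalue a, and put w = v U_k^H and
   z = w H_k V_k.  Expanding the quadratic form gives
     v E_k v^H = |v - z|^2 + sum_(j <> k) |w H_k V_j|^2 + s |w|^2     (s = sigma_k^2),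
   while |z|^2 <= Tr(V_k V_k^H) |w H_k|^2 <= c |w|^2 with c = Pmax kappa, by
   Cauchy-Schwarz and the Rayleigh-quotient bound for the Gram matrix H_k^H H_k.
   The identity (c + s)(c|x|^2 + s|y|^2) - c s |x + y|^2 = |c x - s y|^2 for
   x = v - z, y = z then yields s |v|^2 <= (c + s) v E_k v^H = (c + s) a |v|^2.
   So every eigenvalue of E_k is real and at least s / (c + s); since E_k does
   have eigenvalues, the infimum defining lambda_min is over a nonempty set. *)

Section DotNorm.
Variables (C : numClosedFieldType) (U : lmodType C) (form : {dot U for Num.conj}).
Local Notation "''[' u , v ]" := (form u%R v%R) : ring_scope.
Local Notation "''[' u ]" := '[u, u]%R : ring_scope.

Lemma dnormD_weighted_le (a b : C) (u v : U) : a \is Num.real -> b \is Num.real ->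
  a * b * '[u + v] <= (a + b) * (a * '[u] + b * '[v]).
Proof.
move=> a_real b_real; rewrite -subr_ge0.
suff -> : (a + b) * (a * '[u] + b * '[v]) - a * b * '[u + v] = '[a *: u - b *: v].
  exact: dnorm_ge0.
rewrite dnormB dnormD !linearZl_LR !linearZr_LR /= !rmorphM /=.
by rewrite !(conj_Creal a_real) !(conj_Creal b_real); ring.
Qed.

Lemma dnorm_le_dnormB_penalty (c s t : C) (u z : U) : 0 < c -> 0 <= s ->
  '[z] <= c * t -> s * '[u] <= (c + s) * ('[u - z] + s * t).
Proof.
move=> c_gt0 s_ge0 z_le; rewrite -(ler_pM2l c_gt0) mulrA.
have cs_ge0 : 0 <= c + s by rewrite addr_ge0 // ltW.
have := @dnormD_weighted_le c s (u - z) z (gtr0_real c_gt0) (ger0_real s_ge0).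
rewrite addrNK => /le_trans; apply.
rewrite mulrCA; apply: ler_wpM2l => //.
by rewrite mulrDr lerD2l mulrCA; apply: ler_wpM2l.
Qed.

End DotNorm.

Local Notation "''[' u , v ]" := (dotmx u v) : ring_scope.
Local Notation "''[' u ]" := (dotmx u u) : ring_scope.

Section Dotmx.
Variable C : numClosedFieldType.

Lemma trmxC_mul m n p (A : 'M[C]_(m, n)) (B : 'M[C]_(n, p)) :
  (A *m B)^t* = B^t* *m A^t*.
Proof. by rewrite trmx_mul map_mxM. Qed.

Lemma dotmx_mulmxl m n (u : 'rV[C]_m) (A : 'M[C]_(m, n)) v :
  '[u *m A, v] = '[u, v *m A^t*].
Proof. by rewrite !dotmxE trmxC_mul trmxCK mulmxA. Qed.

Lemma dotmx_mulmxr m n (u : 'rV[C]_n) (A : 'M[C]_(m, n)) v :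
  '[u, v *m A] = '[u *m A^t*, v].
Proof. by rewrite dotmx_mulmxl trmxCK. Qed.

Lemma dotmx_CauchySchwarz n (u v : 'rV[C]_n) : `|'[u, v]| ^+ 2 <= '[u] * '[v].
Proof. exact: (CauchySchwarz (@dotmx C n) u v).1. Qed.

Lemma dotmx_sum n (u v : 'rV[C]_n) : '[u, v] = \sum_j u 0 j * (v 0 j)^*.
Proof. by rewrite dotmxE mxE; apply: eq_bigr => j _; rewrite !mxE. Qed.

Lemma mxtrace_mulmx_trmxC m n (A : 'M[C]_(m, n)) :
  \tr (A *m A^t*) = \sum_i '[row i A].
Proof.
by apply: eq_bigr => i _; rewrite dotmx_sum !mxE; apply: eq_bigr => j _; rewrite !mxE.
Qed.

Lemma dnorm_mulmx_le_trace m n (y : 'rV[C]_m) (A : 'M[C]_(m, n)) :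
  '[y *m A] <= \tr (A *m A^t*) * '[y].
Proof.
rewrite mxtrace_mulC -[X in \tr (_ *m X)]trmxCK mxtrace_mulmx_trmxC.
rewrite dotmx_sum mulr_suml; apply: ler_sum => j _.
have -> : (y *m A) 0 j = '[y, row j (A^t*)].
  by rewrite dotmx_sum !mxE; apply: eq_bigr => i _; rewrite !mxE conjCK.
by rewrite -normCK mulrC dotmx_CauchySchwarz.
Qed.

Lemma hermsymmxP n (A : 'M[C]_n) : reflect (A^t* = A) (A \is hermsymmx).
Proof.
by apply: (iffP (is_hermitianmxP _ _ _)); rewrite expr0 scale1r; apply: esym.
Qed.

Lemma trmxC_mulmx_hermsymmx m n (A : 'M[C]_(m, n)) : A^t* *m A \is hermsymmx.
Proof. by apply/hermsymmxP; rewrite trmxC_mul trmxCK. Qed.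

End Dotmx.

Lemma ctrmxE (R : realType) m n (A : 'M[R[i]]_(m, n)) : ctrmx A = A^t*.
Proof. by apply/matrixP=> i j; rewrite !mxE. Qed.

Section Rayleigh.
Variables (R : realType) (n : nat) (A : 'M[R[i]]_n).
Hypothesis A_herm : A \is hermsymmx.
Let P := spectralmx A.
Let D := spectral_diag A.

Let P_unitary : P *m P^t* = 1%:M.
Proof. exact/unitarymxP/spectral_unitarymx. Qed.

Let trmxC_P_unitary : P^t* *m P = 1%:M.
Proof. exact: mulmx1C P_unitary. Qed.

Let A_spectral : A = P^t* *m diag_mx D *m P.
Proof.
rewrite -invmx_unitary ?spectral_unitarymx //.
exact/orthomx_spectralP/hermitian_normalmx.
Qed.

Let D_real j : (complex.Re (D 0 j))%:C = D 0 j.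
Proof. by rewrite RRe_real // (mxOverP (hermitian_spectral_diag_real A_herm)). Qed.

Lemma real_eigs_spectral_diag j : real_eigs A (complex.Re (D 0 j)).
Proof.
rewrite /real_eigs /= D_real; apply/eigenvalueP; exists (row j P).
  rewrite {1}A_spectral !mulmxA -row_mul P_unitary row1 -rowE row_diag_mx.
  by rewrite -scalemxAl -rowE.
apply/negP => /eqP Pj0; have := congr1 (row j) P_unitary.
rewrite row_mul Pj0 mul0mx row1 => /rowP/(_ j); rewrite !mxE !eqxx => /eqP.
by rewrite eq_sym oner_eq0.
Qed.

Lemma real_eigs_spectral_diagP e : real_eigs A e -> exists j, D 0 j = e%:C.
Proof.
move=> /eigenvalueP[v vA v_neq0].
pose y := v *m P^t*.
have y_neq0 : y != 0.
  apply: contra_neq v_neq0 => y0.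
  by rewrite -[v]mulmx1 -trmxC_P_unitary mulmxA -/y y0 mul0mx.
have yD : y *m diag_mx D = e%:C *: y.
  rewrite /y scalemxAl -vA A_spectral !mulmxA.
  by rewrite -(mulmxA _ P) P_unitary mulmx1.
clearbody y; case/rV0Pn: y_neq0 => j yj; exists j.
move/matrixP: yD => /(_ 0 j); rewrite mul_mx_diag !mxE => yDj.
by apply: (mulfI yj); rewrite yDj mulrC.
Qed.

Lemma spectral_diag_le_lambda_max j : D 0 j <= (lambda_max A)%:C.
Proof.
have eigs_ub : has_ubound (real_eigs A).
  exists (\big[Num.max/0]_(i < n) complex.Re (D 0 i)).
  move=> e /real_eigs_spectral_diagP[i Di].
  by rewrite -[e]/(complex.Re e%:C) -Di; apply: le_bigmax.
by rewrite -D_real lecR; apply: ub_le_sup eigs_ub _ (real_eigs_spectral_diag j).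
Qed.

Lemma dotmx_mulmx_le_lambda_max x : '[x *m A, x] <= (lambda_max A)%:C * '[x].
Proof.
pose y := x *m P^t*.
have -> : '[x *m A, x] = '[y *m diag_mx D, y].
  by rewrite {1}A_spectral !mulmxA dotmx_mulmxl.
have -> : '[x] = '[y].
  by rewrite /y dotmx_mulmxl trmxCK -mulmxA trmxC_P_unitary mulmx1.
rewrite !dotmx_sum mulr_sumr; apply: ler_sum => j _.
rewrite mul_mx_diag mxE mulrAC [leRHS]mulrC -normCK.
by rewrite ler_wpM2l ?exprn_ge0 ?spectral_diag_le_lambda_max.
Qed.

End Rayleigh.

Section SingularValueBound.
Variable R : realType.

Lemma dotmx_mulmx_le_sigma_max n (G : 'M[R[i]]_n) x : G \is hermsymmx ->
  `|'[x *m G, x]| <= (sigma_max G)%:C * '[x].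
Proof.
move=> G_herm; have [->|x_neq0] := eqVneq x 0.
  by rewrite mul0mx linear0l normr0 mulr0.
rewrite /sigma_max ctrmxE; set mu := lambda_max _.
have xG_le : '[x *m G] <= mu%:C * '[x].
  rewrite dotmx_mulmxr -mulmxA.
  have -> : G *m G^t* = G^t* *m G by rewrite (hermsymmxP _ G_herm).
  exact/dotmx_mulmx_le_lambda_max/trmxC_mulmx_hermsymmx.
have mu_ge0 : 0 <= mu.
  have := le_trans (dnorm_ge0 _ _) xG_le.
  by rewrite pmulr_lge0 ?dnorm_gt0 // ler0c.
have sqrt_mu2 : (Num.sqrt mu)%:C ^+ 2 = mu%:C by rewrite -rmorphXn sqr_sqrtr.
rewrite -ler_sqr ?nnegrE ?normr_ge0 ?mulr_ge0 ?ler0c ?sqrtr_ge0 ?dnorm_ge0 //.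
rewrite exprMn sqrt_mu2 expr2 mulrA.
apply: le_trans (dotmx_CauchySchwarz _ _) _.
by rewrite ler_wpM2r ?dnorm_ge0.
Qed.

Lemma dnorm_mulmx_le_sigma_max m n (A : 'M[R[i]]_(m, n)) w :
  '[w *m A] <= (sigma_max (ctrmx A *m A))%:C * '[w].
Proof.
set s := (sigma_max _)%:C; have s_ge0 : 0 <= s by rewrite ler0c sqrtr_ge0.
have := dnorm_ge0 (@dotmx _ n) (w *m A); rewrite le_eqVlt => /orP[/eqP<-|wA_gt0].
  by rewrite mulr_ge0 ?dnorm_ge0.
rewrite -(ler_pM2l wA_gt0) -expr2.
have := dotmx_CauchySchwarz (w *m A *m A^t*) w.
rewrite -dotmx_mulmxr ger0_norm ?dnorm_ge0 // => /le_trans; apply.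
rewrite mulrA ler_wpM2r ?dnorm_ge0 // -[leLHS]ger0_norm ?dnorm_ge0 //.
rewrite {1}dotmx_mulmxr trmxCK -(mulmxA (w *m A)) mulrC /s ctrmxE.
exact: dotmx_mulmx_le_sigma_max (trmxC_mulmx_hermsymmx A).
Qed.

End SingularValueBound.

Section Downlink.
Variables (R : realType) (K M N d : nat).
Variables (H : 'I_K -> 'M[R[i]]_(N, M)) (sigma2 : 'I_K -> R).
Variables (U : 'I_K -> 'M[R[i]]_(N, d)) (V : 'I_K -> 'M[R[i]]_(M, d)).

Lemma sigma_max_le_kappa k : sigma_max (ctrmx (H k) *m H k) <= kappa H.
Proof. exact: (le_bigmax _ (fun k => sigma_max (ctrmx (H k) *m H k))). Qed.

Lemma dnorm_mulmx_le_power_kappa (Pmax : R) k w :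
  \sum_(j < K) \tr (V j *m ctrmx (V j)) <= Pmax%:C ->
  '[w *m H k *m V k] <= (Pmax * kappa H)%:C * '[w].
Proof.
move=> power; have tr_ge0 j : 0 <= \tr (V j *m ctrmx (V j)).
  by rewrite ctrmxE mxtrace_mulmx_trmxC sumr_ge0 // => i _; apply: dnorm_ge0.
have trk_le : \tr (V k *m ctrmx (V k)) <= Pmax%:C.
  by apply: le_trans power; rewrite (bigD1 k) //= lerDl sumr_ge0.
apply: le_trans (dnorm_mulmx_le_trace _ _) _; rewrite -ctrmxE rmorphM -mulrA.
apply: ler_pM => //; first exact: dnorm_ge0.
apply: le_trans (dnorm_mulmx_le_sigma_max _ _) _.
by rewrite ler_wpM2r ?dnorm_ge0 ?lecR ?sigma_max_le_kappa.
Qed.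

Lemma Emat_dotmx k v (w := v *m ctrmx (U k)) :
  '[v *m Emat H sigma2 U V k, v] =
    '[v - w *m H k *m V k] + \sum_(j < K | j != k) '[w *m H k *m V j]
    + (sigma2 k)%:C * '[w].
Proof.
rewrite /Emat /w !ctrmxE mulmxDr linearDl /= -addrA; congr (_ + _).
  by rewrite mulmxA dotmx_mulmxl trmxCK mulmxBr mulmx1 !mulmxA.
rewrite !mulmxA dotmx_mulmxl mulmxDr linearDl /= mul_mx_scalar linearZl /=.
congr (_ + _); rewrite mulmx_sumr linear_sumlz /=; apply: eq_bigr => j _.
by rewrite ctrmxE !mulmxA dotmx_mulmxl trmxCK dotmx_mulmxl trmxCK.
Qed.

Section EmatBound.
Variables (c : R) (k : 'I_K).
Hypotheses (c_gt0 : 0 < c) (sigma2_ge0 : 0 <= sigma2 k).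
Hypothesis gain : forall w, '[w *m H k *m V k] <= c%:C * '[w].

Lemma Emat_dotmx_ge v :
  (sigma2 k)%:C * '[v] <= (c + sigma2 k)%:C * '[v *m Emat H sigma2 U V k, v].
Proof.
have [cC_gt0 sC_ge0] : 0 < c%:C /\ 0 <= (sigma2 k)%:C by rewrite ltcR ler0c.
rewrite Emat_dotmx rmorphD; set w := v *m ctrmx (U k).
apply: le_trans (dnorm_le_dnormB_penalty v cC_gt0 sC_ge0 (gain w)) _.
apply: ler_wpM2l; first by rewrite addr_ge0 // ltW.
by rewrite lerD2r lerDl sumr_ge0 // => j _; apply: dnorm_ge0.
Qed.

Lemma Emat_eigenvalue_ge a :
  eigenvalue (Emat H sigma2 U V k) a -> (sigma2 k / (c + sigma2 k))%:C <= a.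
Proof.
move=> /eigenvalueP[v vE v_neq0]; have := Emat_dotmx_ge v.
rewrite vE linearZl /= mulrA ler_pM2r ?dnorm_gt0 //.
have cs_gt0 : 0 < c + sigma2 k by rewrite (lt_le_trans c_gt0) // lerDl.
by rewrite fmorph_div ler_pdivrMr ?ltcR // mulrC.
Qed.

End EmatBound.

End Downlink.

Theorem lemma1 (R : realType) (K M N d : nat) (Hd : (0 < d)%N)
  (H : 'I_K -> 'M[R[i]]_(N, M)) (sigma2 : 'I_K -> R) (Pmax : R)
  (Hsigma : forall k, 0 < sigma2 k) (HP : 0 < Pmax) (Hkappa : 0 < kappa H)
  (U : 'I_K -> 'M[R[i]]_(N, d)) (V : 'I_K -> 'M[R[i]]_(M, d))
  (Hpow : \sum_(k < K) \tr (V k *m ctrmx (V k)) <= Pmax%:C) :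
  forall k : 'I_K,
    sigma2 k / (Pmax * kappa H + sigma2 k) <= lambda_min (Emat H sigma2 U V k).
Proof.
move=> k; have c_gt0 : 0 < Pmax * kappa H by rewrite mulr_gt0.
have sigma2_ge0 := ltW (Hsigma k).
have lb := Emat_eigenvalue_ge (U := U) c_gt0 sigma2_ge0
  (fun w => dnorm_mulmx_le_power_kappa H k w Hpow).
apply: lb_le_inf => [|x Ex]; last by rewrite -lecR; apply: lb.
have [a Ea] := eigenvalue_closed (Emat H sigma2 U V k) Hd.
have a_ge0 : 0 <= a.
  by apply: le_trans (lb a Ea); rewrite ler0c divr_ge0 // addr_ge0 // ltW.
by exists (complex.Re a); rewrite /real_eigs /= RRe_real // ger0_real.
Qed.
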